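(* Let $D$ be a squarefree integer, not a perfect square, with $D\equiv 1\pmod 8$, and let $D=\pm\prod_{i=1}^r p_i$ with distinct primes $p_1<\cdots<p_r$. Define \[ c_{\mathrm{loc}}:=4\prod_{i=1}^r\sum_{l=1}^{\infty}\frac{|\mathcal{R}_l^*(p_i)|}{p_i^{2(8l+1)}}. \] Then $c_{\mathrm{loc}}\geq \dfrac{4}{D^2}$.
   Context: $Q_1(\mathbf{t})=t_2^2-Dt_3^2-t_0t_1$, $Q_2(\mathbf{t})=t_2^2-Dt_4^2-(t_0+At_1)(t_0+Bt_1)$, $G(A,B)=A^2-2AB+B^2-2A-2B+1$. For a prime $p$ and $l\geq 1$, $\mathcal{R}_l(p)$ is the set of pairs of residue classes $(A,B)$ modulo $p^{8l+1}$ such that $p^{l+1}$ divides none of $A,B,A-B,G(A,B)$ and $Q_1(\mathbf{t})\equiv Q_2(\mathbf{t})\equiv 0\pmod{p^{8l+1}}$ has a solution $\mathbf{t}\in(\mathbb{Z}/p^{8l+1}\mathbb{Z})^5$ with components not all divisible by $p$. Set $\mathcal{R}_0(p)=\emptyset$, and for $l\geq 1$ let $\mathcal{R}_l^*(p)\subset\mathcal{R}_l(p)$ be the set of $(A,B)\in\mathcal{R}_l(p)$ whose reduction modulo $p^{8(l-1)+1}$ is not in $\mathcal{R}_{l-1}(p)$. *)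

From mathcomp Require Import all_boot all_order all_algebra.
From mathcomp Require Import all_classical all_reals all_analysis.
Set Implicit Arguments. Unset Strict Implicit. Unset Printing Implicit Defensive.
Import Order.TTheory GRing.Theory Num.Theory.
Local Open Scope ring_scope.

Definition Q1 (D : int) (t : 'I_5 -> int) : int :=
  t (inord 2) ^+ 2 - D * t (inord 3) ^+ 2 - t (inord 0) * t (inord 1).
Definition Q2 (D A B : int) (t : 'I_5 -> int) : int :=
  t (inord 2) ^+ 2 - D * t (inord 4) ^+ 2
  - (t (inord 0) + A * t (inord 1)) * (t (inord 0) + B * t (inord 1)).
Definition G (A B : int) : int :=
  A ^+ 2 - 2 * A * B + B ^+ 2 - 2 * A - 2 * B + 1.

Definition modl (p l : nat) : nat := (p ^ (8 * l + 1))%N.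

(* (A,B) (integer representatives of residue classes mod p^(8l+1)) lies in
   R_l(p); for l = 0 this is false, i.e. R_0(p) is empty. *)
Definition inR (D : int) (p l : nat) (A B : int) : bool :=
  (0 < l)%N &&
  [&& ~~ ((p ^ l.+1)%:Z %| A)%Z, ~~ ((p ^ l.+1)%:Z %| B)%Z,
      ~~ ((p ^ l.+1)%:Z %| A - B)%Z, ~~ ((p ^ l.+1)%:Z %| G A B)%Z &
      [exists t : {ffun 'I_5 -> 'I_(modl p l)},
         [&& [exists i, ~~ (p %| t i)%N],
             ((modl p l)%:Z %| Q1 D (fun i => (t i : nat)%:Z))%Z &
             ((modl p l)%:Z %| Q2 D A B (fun i => (t i : nat)%:Z))%Z]]].

Definition Rset (D : int) (p l : nat) : {set 'I_(modl p l) * 'I_(modl p l)} :=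
  [set x : 'I_(modl p l) * 'I_(modl p l) | inR D p l (x.1 : nat)%:Z (x.2 : nat)%:Z].

Definition Rstar (D : int) (p l : nat) : {set 'I_(modl p l) * 'I_(modl p l)} :=
  [set x : 'I_(modl p l) * 'I_(modl p l) | inR D p l (x.1 : nat)%:Z (x.2 : nat)%:Z &&
           ~~ inR D p l.-1 ((x.1 : nat) %% modl p l.-1)%N%:Z
                           ((x.2 : nat) %% modl p l.-1)%N%:Z].

Definition squarefree (D : int) : Prop :=
  D != 0 /\ forall p : nat, prime p -> ~~ ((p ^ 2)%N %| `|D|)%N.

Definition local_sum (R : realType) (D : int) (p : nat) : \bar R :=
  (\sum_(1 <= l <oo) ((#|Rstar D p l|%:R / (p ^ (2 * (8 * l + 1)))%:R : R)%:E))%E.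

Definition c_loc (R : realType) (D : int) : \bar R :=
  (4%:E * \prod_(p <- primes `|D|) local_sum R D p)%E.

From mathcomp Require Import all_boot all_order all_algebra.
From mathcomp Require Import all_classical all_reals all_analysis.
From mathcomp Require Import ring lra zify.
Import Order.TTheory GRing.Theory Num.Theory.
Local Open Scope ring_scope.
Set Implicit Arguments. Unset Strict Implicit. Unset Printing Implicit Defensive.

(* Only the term [l = 1] of each local factor is used, and [R_1^*(p) = R_1(p)] since
   [R_0(p)] is empty.  Every prime [p] of [D] is odd and divides [D] exactly.  If
   [(1 + A)(1 + B) = 1 mod p] and [p^2] divides none of [A, B, A - B, G(A, B)], then
   [(A, B)] lies in [R_1(p)]: with [t0 = t1 = 1] the two congruences mod [p^9] reduce to a
   linear one, solvable because [2 D / p] is a unit mod [p], and to extracting a square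
   root of a number congruent to [1] mod [p], done by Hensel lifting since [p] is odd.
   The classes [A = 1, 2 B = -1] mod [p] and their mirror images give
   [|R_1(p)| >= 2 p^16] for [p > 3]; six classes mod [9] give [|R_1(3)| >= 2 3^15].
   Hence the local factor at [p] is at least [2 / p^2] ([2/3 / 9] at [p = 3]), and as
   [D = 1 mod 8] rules out [D = +-3], the product of these bounds is at least [1 / D^2]. *)

Lemma invz_mod_prime_expn (p k : nat) (m : int) : prime p -> ~~ (p%:Z %| m)%Z ->
  exists u : int, (p%:Z ^+ k %| u * m - 1)%Z.
Proof.
move=> p_pr pNm; have /coprimezP [[u v] /= uv] : coprimez m (p%:Z ^+ k).
  by apply: coprimezXr; rewrite coprimezE coprime_sym prime_coprime.
by exists u; apply/dvdzP; exists (- v); rewrite -uv; ring.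
Qed.

Lemma dvdz_oddprime_mul2l (p : nat) (m : int) : prime p -> (2 < p)%N ->
  (p%:Z %| 2 * m)%Z = (p%:Z %| m)%Z.
Proof.
move=> p_pr p_gt2; apply: Gauss_dvdzr.
rewrite coprimezE prime_coprime //; apply/negP => /(dvdn_leq (isT : (0 < 2)%N)); lia.
Qed.

Lemma prime_ndvdz1 (p : nat) : prime p -> ~~ (p%:Z %| 1%R)%Z.
Proof. by move=> p_pr; rewrite dvdz1 /= gtn_eqF // prime_gt1. Qed.

Lemma ndvdz_mul_sub (m c k x : int) :
  (m %| c * x - k)%Z -> ~~ (m %| k)%Z -> ~~ (m %| x)%Z.
Proof.
move=> mck; apply: contra => mx.
by have := rpredB (dvdz_mull c mx) mck; rewrite opprB addrC subrK.
Qed.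

Lemma ndvdz_prime_sqr (p : nat) (x : int) :
  ~~ (p%:Z %| x)%Z -> ~~ ((p ^ 2)%:Z %| x)%Z.
Proof. by apply: contra => /(dvdz_trans _); apply; rewrite dvdzE /= dvdn_exp. Qed.

Lemma prime_ndvdz_exp3 (p n : nat) : prime p -> (3 < p)%N -> ~~ (p%:Z %| 3 ^+ n)%Z.
Proof.
move=> p_pr p_gt3; rewrite dvdzE abszX /= Euclid_dvdX //.
by apply/negP => /andP [/(dvdn_leq (isT : (0 < 3)%N))]; lia.
Qed.

Lemma dvdz_subn_modn (m n : nat) : (n%:Z %| m%:Z - (m %% n)%N%:Z)%Z.
Proof.
by apply/dvdzP; exists (m %/ n)%N%:Z; rewrite {1}(divn_eq m n) PoszD PoszM addrK.
Qed.

Lemma absz_modz_ltn (x : int) (M : nat) : (0 < M)%N -> (`|(x %% M%:Z)%Z| < M)%N.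
Proof.
move=> M_gt0; rewrite -ltz_nat gez0_abs ?ltz_pmod ?modz_ge0 //; lia.
Qed.

Lemma dvdz_modz_subr (x : int) (M : nat) : (0 < M)%N ->
  (M%:Z %| `|(x %% M%:Z)%Z|%N%:Z - x)%Z.
Proof.
move=> M_gt0; rewrite gez0_abs ?modz_ge0 //; last by lia.
by apply/dvdzP; exists (- (x %/ M%:Z)%Z); rewrite {2}(divz_eq x M%:Z); ring.
Qed.

(* Hensel lifting: a root [s] mod [p^(k+1)] is corrected by a multiple of [p^(k+1)]
   chosen with the inverse of [2 s] mod [p]. *)
Lemma sqrz_mod_prime_expn (p : nat) (a : int) : prime p -> (2 < p)%N ->
  (p%:Z %| a - 1)%Z -> forall k, exists s : int, (p%:Z ^+ k.+1 %| s ^+ 2 - a)%Z.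
Proof.
move=> p_pr p_gt2 pa1; elim=> [|k [s /dvdzP [e se]]].
  by exists 1; rewrite expr1 -opprB dvdzE abszN.
have pNs : ~~ (p%:Z %| 2 * s)%Z.
  rewrite dvdz_oddprime_mul2l //; apply: contra (prime_ndvdz1 p_pr) => ps.
  have pa : (p%:Z %| a)%Z.
    rewrite (_ : a = s ^+ 2 - e * p%:Z ^+ k.+1); last by rewrite -se; ring.
    by rewrite rpredB ?dvdz_exp // dvdz_mull // exprS dvdz_mulr.
  by have := rpredB pa pa1; rewrite opprB addrC subrK.
have [u /dvdzP [v uv]] := invz_mod_prime_expn 1 p_pr pNs.
exists (s - u * e * p%:Z ^+ k.+1); apply/dvdzP.
exists (- e * v + u ^+ 2 * e ^+ 2 * p%:Z ^+ k).
have -> : (s - u * e * p%:Z ^+ k.+1) ^+ 2 - a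
          = (s ^+ 2 - a) - e * p%:Z ^+ k.+1 * (u * (2 * s)) + u ^+ 2 * e ^+ 2 * (p%:Z ^+ k.+1) ^+ 2.
  by ring.
rewrite se (_ : u * (2 * s) = 1 + v * p%:Z ^+ 1); last by rewrite -uv; ring.
rewrite !exprS; ring.
Qed.

Lemma Q12_solvable_mod_expn (p k : nat) (d A B : int) : prime p -> (2 < p)%N ->
  ~~ (p%:Z %| d)%Z -> (p%:Z %| (1 + A) * (1 + B) - 1)%Z ->
  exists2 t : 'I_5 -> int, t (inord 1) = 1 &
    (p%:Z ^+ k.+1 %| Q1 (p%:Z * d) t)%Z && (p%:Z ^+ k.+1 %| Q2 (p%:Z * d) A B t)%Z.
Proof.
move=> p_pr p_gt2 pNd /dvdzP [W eW].
have {}eW : (1 + A) * (1 + B) = 1 + W * p%:Z by rewrite -eW; ring.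
have pN2d : ~~ (p%:Z %| 2 * d)%Z by rewrite dvdz_oddprime_mul2l.
have [u /dvdzP [c uc]] := invz_mod_prime_expn k p_pr pN2d.
pose tau := u * (W + d).
have pa : (p%:Z %| (1 + p%:Z * d * tau ^+ 2) - 1)%Z.
  by apply/dvdzP; exists (d * tau ^+ 2); ring.
have [s ps] := sqrz_mod_prime_expn p_pr p_gt2 pa k.
exists (fun i : 'I_5 => nth 0 [:: 1; 1; s; tau; tau - 1] i); first by rewrite inordK.
rewrite /Q1 /Q2 !inordK //= !mulr1; set Q := s ^+ 2 - _ - _.
have -> : Q = s ^+ 2 - (1 + p%:Z * d * tau ^+ 2) by rewrite /Q; ring.
rewrite ps /= (_ : _ - _ = s ^+ 2 - (1 + p%:Z * d * tau ^+ 2)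
                         + p%:Z * (W + d) * (u * (2 * d) - 1)); last by rewrite eW /tau; ring.
by rewrite rpredD // uc; apply/dvdzP; exists ((W + d) * c); rewrite exprS; ring.
Qed.

Lemma Q1_congr (D M : int) (f g : 'I_5 -> int) :
  (forall i, (M %| f i - g i)%Z) -> (M %| Q1 D f)%Z = (M %| Q1 D g)%Z.
Proof.
move=> fg; rewrite -[Q1 D f](subrK (Q1 D g)) rpredDl //.
have -> : Q1 D f - Q1 D g =
    (f (inord 2) + g (inord 2)) * (f (inord 2) - g (inord 2))
  - D * (f (inord 3) + g (inord 3)) * (f (inord 3) - g (inord 3))
  - (f (inord 1) * (f (inord 0) - g (inord 0)) + g (inord 0) * (f (inord 1) - g (inord 1))).
  by rewrite /Q1; ring.
by apply: rpredB; [apply: rpredB | apply: rpredD]; apply: dvdz_mull; apply: fg.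
Qed.

Lemma Q2_congr (D A B M : int) (f g : 'I_5 -> int) :
  (forall i, (M %| f i - g i)%Z) -> (M %| Q2 D A B f)%Z = (M %| Q2 D A B g)%Z.
Proof.
move=> fg; rewrite -[Q2 D A B f](subrK (Q2 D A B g)) rpredDl //.
have -> : Q2 D A B f - Q2 D A B g =
    (f (inord 2) + g (inord 2)) * (f (inord 2) - g (inord 2))
  - D * (f (inord 4) + g (inord 4)) * (f (inord 4) - g (inord 4))
  - ((f (inord 0) + B * f (inord 1) + g (inord 0) + A * g (inord 1))
        * (f (inord 0) - g (inord 0))
     + (A * (f (inord 0) + B * f (inord 1)) + B * (g (inord 0) + A * g (inord 1)))
        * (f (inord 1) - g (inord 1))).
  by rewrite /Q2; ring.
by apply: rpredB; [apply: rpredB | apply: rpredD]; apply: dvdz_mull; apply: fg.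
Qed.

Definition admissible (p : nat) (A B : int) : bool :=
  [&& (p%:Z %| (1 + A) * (1 + B) - 1)%Z, ~~ ((p ^ 2)%:Z %| A)%Z, ~~ ((p ^ 2)%:Z %| B)%Z,
      ~~ ((p ^ 2)%:Z %| A - B)%Z & ~~ ((p ^ 2)%:Z %| G A B)%Z].

Lemma inR1_admissible (p : nat) (d A B : int) : prime p -> (2 < p)%N ->
  ~~ (p%:Z %| d)%Z -> admissible p A B -> inR (p%:Z * d) p 1 A B.
Proof.
move=> p_pr p_gt2 pNd /and5P [pAB nA nB nAB nG]; rewrite /inR nA nB nAB nG /=.
have [t t1 /andP [tQ1 tQ2]] := Q12_solvable_mod_expn 8 p_pr p_gt2 pNd pAB.
have M_gt1 : (1 < modl p 1)%N by rewrite /modl -{1}(expn0 p) ltn_exp2l ?prime_gt1.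
have M_gt0 := ltnW M_gt1.
have ME : (modl p 1)%:Z = p%:Z ^+ 9 by rewrite /modl -natz natrX natz.
apply/existsP; exists [ffun i => Ordinal (absz_modz_ltn (t i) M_gt0)].
have tE i : (modl p 1 %| `|(t i %% modl p 1)%Z|%N%:Z - t i)%Z := dvdz_modz_subr _ M_gt0.
apply/and3P; split.
- apply/existsP; exists (inord 1); rewrite ffunE /= t1 modz_small ?M_gt1 //.
  by rewrite dvdn1 gtn_eqF ?prime_gt1.
- by rewrite (Q1_congr _ (g := t)) => [|i]; rewrite ?ME // ffunE tE.
- by rewrite (Q2_congr _ _ _ (g := t)) => [|i]; rewrite ?ME // ffunE tE.
Qed.

Lemma admissibleC (p : nat) (A B : int) : admissible p A B = admissible p B A.
Proof.
rewrite /admissible [(1 + B) * _]mulrC -[B - A]opprB rpredN.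
rewrite (_ : G B A = G A B); last by rewrite /G; ring.
by rewrite [X in _ = (_ && X)]andbCA.
Qed.

(* On these classes [2 (A - B) = 3] and [4 G(A, B) = 9] mod [p], whence [p > 3]. *)
Lemma admissible_halves (p : nat) (A B : int) : prime p -> (3 < p)%N ->
  (p%:Z %| A - 1)%Z -> (p%:Z %| 2 * B + 1)%Z -> admissible p A B.
Proof.
move=> p_pr p_gt3 pA pB; have pN3 n := prime_ndvdz_exp3 n p_pr p_gt3.
apply/and5P; split; last 4 first.
- apply/ndvdz_prime_sqr/(@ndvdz_mul_sub _ 1 _ _ _ (pN3 0%N)).
  by rewrite mul1r expr0.
- apply/ndvdz_prime_sqr/(@ndvdz_mul_sub _ (-2) _ _ _ (pN3 0%N)).
  by rewrite expr0 (_ : _ - 1 = - (2 * B + 1)) ?rpredN //; ring.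
- apply/ndvdz_prime_sqr/(@ndvdz_mul_sub _ 2 _ _ _ (pN3 1%N)).
  by rewrite (_ : _ - _ = 2 * (A - 1) - (2 * B + 1)) ?rpredB ?dvdz_mull //; ring.
- apply/ndvdz_prime_sqr/(@ndvdz_mul_sub _ 4 _ _ _ (pN3 2%N)).
  rewrite (_ : _ - _ = (A - 1) * (4 * A - 8 * B - 4) + (2 * B + 1) * (2 * B - 9)).
    by rewrite rpredD ?dvdz_mulr.
  by rewrite /G; ring.
rewrite -(dvdz_oddprime_mul2l _ p_pr (ltnW p_gt3)).
rewrite (_ : 2 * _ = (1 + A) * (2 * B + 1) + (A - 1)); last by ring.
by rewrite rpredD ?dvdz_mull.
Qed.

Lemma admissible_shift (p : nat) (A B j1 j2 : int) :
  admissible p (A + (p ^ 2)%:Z * j1) (B + (p ^ 2)%:Z * j2) = admissible p A B.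
Proof.
set P := (p ^ 2)%:Z; have PE : P = p%:Z * p%:Z by rewrite /P expnS expn1 PoszM.
have shift x c : (P %| x + P * c)%Z = (P %| x)%Z := rpredDr _ (dvdz_mulr c (dvdzz P)).
rewrite /admissible (_ : _ - (B + P * j2) = A - B + P * (j1 - j2)); last by ring.
rewrite (_ : G _ _ = G A B + P * (2 * (A - B) * (j1 - j2) + P * (j1 - j2) ^+ 2
                                  - 2 * (j1 + j2))); last by rewrite /G; ring.
rewrite (_ : _ * _ - 1 = (1 + A) * (1 + B) - 1
           + p%:Z * (p%:Z * (j1 * (1 + B) + (1 + A) * j2 + P * j1 * j2))).
  by rewrite !shift rpredDr // dvdz_mulr.
by rewrite PE; ring.
Qed.

Lemma admissible_modn (p A B : nat) :
  admissible p A%:Z B%:Z = admissible p (A %% p ^ 2)%N%:Z (B %% p ^ 2)%N%:Z.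
Proof.
rewrite -[RHS](admissible_shift _ _ _ (A %/ p ^ 2)%N%:Z (B %/ p ^ 2)%N%:Z).
by rewrite -!PoszM -!PoszD !(addnC (_ %% _)%N) !(mulnC (p ^ 2)%N) -!divn_eq.
Qed.

Lemma leq_size_pairs (n : nat) (s : seq (nat * nat)) : uniq s ->
  all (fun ab => (ab.1 < n) && (ab.2 < n))%N s ->
  (size s <= #|[set y : 'I_n * 'I_n | ((y.1 : nat), (y.2 : nat)) \in s]|)%N.
Proof.
move=> s_uniq /allP s_lt; pose val2 (y : 'I_n * 'I_n) := ((y.1 : nat), (y.2 : nat)).
rewrite cardE -[X in (_ <= X)%N](size_map val2).
apply: uniq_leq_size => // -[a b] ab_s; have /andP [a_lt b_lt] := s_lt _ ab_s.
by apply/mapP; exists (Ordinal a_lt, Ordinal b_lt); rewrite ?mem_enum ?inE.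
Qed.

Lemma leq_card_lift (M n K : nat) (S0 : {set 'I_n * 'I_n}) (S : {set 'I_M * 'I_M}) :
  M = (n * K)%N ->
  (forall (x : 'I_M * 'I_M) (y : 'I_n * 'I_n), y \in S0 ->
     (x.1 %% n)%N = y.1 -> (x.2 %% n)%N = y.2 -> x \in S) ->
  (#|S0| * K ^ 2 <= #|S|)%N.
Proof.
move=> MnK S0S.
have lift_lt (a : 'I_n) (j : 'I_K) : (a + n * j < M)%N.
  rewrite MnK; apply: (@leq_trans (n * j.+1)); first by rewrite mulnS ltn_add2r.
  by rewrite leq_mul2l ltn_ord orbT.
have liftK (a : 'I_n) (j : 'I_K) : ((a + n * j) %% n = a)%N.
  by rewrite addnC mulnC modnMDl modn_small.
have liftKd (a : 'I_n) (j : 'I_K) : ((a + n * j) %/ n = j)%N.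
  by rewrite addnC mulnC divnMDl ?divn_small ?addn0 //; apply: leq_ltn_trans (ltn_ord a).
pose f (z : ('I_n * 'I_n) * ('I_K * 'I_K)) : 'I_M * 'I_M :=
  (Ordinal (lift_lt z.1.1 z.2.1), Ordinal (lift_lt z.1.2 z.2.2)).
have lift_inj (a a' : 'I_n) (j j' : 'I_K) :
    (a + n * j = a' + n * j')%N -> a = a' /\ j = j'.
  move=> e; split; apply: val_inj => /=.
    by rewrite -(liftK a j) e liftK.
  by rewrite -(liftKd a j) e liftKd.
have f_inj : injective f.
  by move=> [[a1 b1] [j1 k1]] [[a2 b2] [j2 k2]] [/lift_inj [-> ->] /lift_inj [-> ->]].
have : f @: finset.setX S0 [set: 'I_K * 'I_K] \subset S.
  apply/fintype.subsetP => _ /imsetP [[y j] /finset.setXP [yS0 _] ->].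
  by apply: (S0S _ y yS0); rewrite /= liftK.
move/subset_leq_card; rewrite card_imset // cardsX cardsT card_prod !card_ord.
by rewrite expnS expn1.
Qed.

Lemma leq_card_Rset1 (p n K : nat) (d : int) (s : seq (nat * nat)) :
  prime p -> (2 < p)%N -> ~~ (p%:Z %| d)%Z -> modl p 1 = (n * K)%N -> uniq s ->
  all (fun ab => (ab.1 < n) && (ab.2 < n))%N s ->
  (forall A B : nat, ((A %% n)%N, (B %% n)%N) \in s -> admissible p A%:Z B%:Z) ->
  (size s * K ^ 2 <= #|Rset (p%:Z * d) p 1|)%N.
Proof.
move=> p_pr p_gt2 pNd MnK s_uniq s_lt s_adm.
pose S0 := [set y : 'I_n * 'I_n | ((y.1 : nat), (y.2 : nat)) \in s].
apply: leq_trans (leq_card_lift (S0 := S0) MnK _).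
  by rewrite leq_mul2r leq_size_pairs ?orbT.
move=> x y; rewrite !inE => y_s x1 x2; apply: inR1_admissible => //.
by apply: s_adm; rewrite x1 x2.
Qed.

Lemma card_Rset1_ge (p : nat) (d : int) : prime p -> (3 < p)%N -> ~~ (p%:Z %| d)%Z ->
  (2 * p ^ 16 <= #|Rset (p%:Z * d) p 1|)%N.
Proof.
move=> p_pr p_gt3 pNd; set h := p./2.
have p_odd : odd p by case: (even_prime p_pr) => // p2; rewrite p2 in p_gt3.
have pE : p = (2 * h + 1)%N by have := odd_double_half p; rewrite p_odd /h; lia.
have adm_half A B : (A %% p = 1)%N -> (B %% p = h)%N -> admissible p A%:Z B%:Z.
  move=> Ap Bp; apply: admissible_halves => //.
    by have := dvdz_subn_modn A p; rewrite Ap.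
  have := dvdz_subn_modn B p; rewrite Bp => pB.
  rewrite (_ : 2 * B%:Z + 1 = 2 * (B%:Z - h%:Z) + p%:Z) ?rpredD ?dvdz_mull //.
  by rewrite pE PoszD PoszM; ring.
apply: leq_trans (@leq_card_Rset1 p p (p ^ 8) d [:: (1, h); (h, 1)]%N p_pr (ltnW p_gt3) pNd
                   _ _ _ _); first by rewrite -expnM.
- by rewrite /modl -expnS.
- by rewrite /= inE andbT; apply/eqP => -[]; lia.
- by rewrite /= !andbT; apply/and3P; split; lia.
move=> A B; rewrite !inE => /orP [] /eqP [Ap Bp]; first exact: adm_half.
by rewrite admissibleC; apply: adm_half.
Qed.

Lemma card_Rset1_ge_3 (d : int) : ~~ (3%:Z %| d)%Z ->
  (2 * 3 ^ 15 <= #|Rset (3%:Z * d) 3 1|)%N.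
Proof.
move=> pNd; pose s := [:: (3, 6); (6, 3); (1, 7); (7, 1); (4, 7); (7, 4)]%N.
have s_adm : all (fun ab => admissible 3 ab.1%:Z ab.2%:Z) s by [].
apply: leq_trans (@leq_card_Rset1 3 9 (3 ^ 7) d s isT isT pNd _ isT isT _).
- by rewrite -expnM (expnS 3 14) mulnA; exact: leqnn.
- by rewrite /modl (expnD 3 2 7).
- by move=> A B; rewrite admissible_modn; apply: (allP s_adm (_, _)).
Qed.

Lemma Rstar1 (D : int) (p : nat) : Rstar D p 1 = Rset D p 1.
Proof. by apply/setP => x; rewrite !inE /inR /= andbT. Qed.

Lemma local_sum_ge_first (R : realType) (D : int) (p : nat) :
  ((#|Rset D p 1|%:R / (p ^ 18)%:R : R)%:E <= local_sum R D p)%E.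
Proof.
rewrite -Rstar1 /local_sum; apply: le_trans (nneseries_lim_ge 2 _).
  by rewrite big_nat1.
by move=> n _ _; rewrite lee_fin divr_ge0.
Qed.

Lemma squarefree_prime_factor (D : int) (p : nat) : squarefree D -> prime p ->
  (p %| `|D|)%N -> exists2 d, D = p%:Z * d & ~~ (p%:Z %| d)%Z.
Proof.
move=> [_ D_sqf] p_pr pD; exists (D %/ p%:Z)%Z.
  by rewrite mulrC divzK // dvdzE.
apply: contra (D_sqf p p_pr) => /dvdzP [c dE]; apply/dvdnP; exists `|c|%N.
have DE : D = c * p%:Z * p%:Z by rewrite -dE divzK // dvdzE.
by rewrite DE !abszM /= -mulnA (expnS p 1) expn1.
Qed.

Definition local_weight (R : realType) (p : nat) : R := if p == 3%N then 2 / 3 else 2.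

Lemma local_sum_ge_weight (R : realType) (D : int) (p : nat) : squarefree D ->
  prime p -> (2 < p)%N -> (p %| `|D|)%N ->
  ((local_weight R p / (p ^ 2)%:R)%:E <= local_sum R D p)%E.
Proof.
move=> D_sqf p_pr p_gt2 pD; have [d DE pNd] := squarefree_prime_factor D_sqf p_pr pD.
apply: le_trans (local_sum_ge_first R D p); rewrite lee_fin DE.
suff w_le : local_weight R p * (p ^ 16)%:R <= #|Rset (p%:Z * d) p 1|%:R.
  have pX_gt0 k : 0 < (p ^ k)%:R :> R by rewrite ltr0n expn_gt0 prime_gt0.
  rewrite (_ : p ^ 18 = p ^ 2 * p ^ 16)%N; last by rewrite -expnD.
  rewrite (natrM _ (p ^ 2)).
  by rewrite ler_pdivlMr ?mulr_gt0 // mulrA divfK ?gt_eqF.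
rewrite /local_weight; case: eqP => [p3 | /eqP p_ne3]; last first.
  by rewrite -natrM ler_nat card_Rset1_ge //; lia.
move: pNd; rewrite p3 => /card_Rset1_ge_3; rewrite -(ler_nat R) => /(le_trans _); apply.
rewrite (expnS 3 15); move: (3 ^ 15)%N => X.
by rewrite !natrM mulrA divfK ?pnatr_eq0.
Qed.

Lemma prod_local_weight_ge1 (R : realType) (s : seq nat) : uniq s ->
  (3%N \in s -> 1 < size s)%N -> 1 <= \prod_(p <- s) local_weight R p.
Proof.
have prodE t : 3%N \notin t -> \prod_(p <- t) local_weight R p = 2 ^+ size t.
  elim: t => [|a t IH]; first by rewrite big_nil.
  rewrite inE negb_or big_cons => /andP [a_ne3 t3].
  by rewrite /local_weight eq_sym (negbTE a_ne3) IH // exprS.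
move=> s_uniq s_size; have [s3 | sN3] := boolP (3%N \in s); last first.
  by rewrite prodE // exprn_ege1 // ler1n.
rewrite (perm_big _ (perm_to_rem s3)) big_cons prodE ?mem_rem_uniqF //.
rewrite /local_weight eqxx size_rem //.
have : 2 <= 2 ^+ (size s).-1 :> R.
  move: (s_size s3); case: (size s) => [|[|m]] // _.
  by rewrite exprS ler_peMr ?exprn_ege1 ?ler1n.
by move=> two_le; apply: le_trans (ler_wpM2l _ two_le); lra.
Qed.

Lemma lee_prod_seq (R : realType) (I : eqType) (s : seq I) (f g : I -> \bar R) :
  (forall i, 0 <= f i)%E -> {in s, forall i, f i <= g i}%E ->
  (\prod_(i <- s) f i <= \prod_(i <- s) g i)%E.
Proof.
move=> f_ge0; elim: s => [|i s IH] fg; first by rewrite !big_nil.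
rewrite !big_cons lee_pmul ?prode_ge0 ?fg ?mem_head // IH // => j js.
by apply: fg; rewrite inE js orbT.
Qed.

Lemma prod_primes_squarefree (n : nat) : (0 < n)%N ->
  (forall p, prime p -> ~~ (p ^ 2 %| n)%N) -> (\prod_(p <- primes n) p)%N = n.
Proof.
move=> n_gt0 n_sqf; rewrite {2}(prod_prime_decomp n_gt0) prime_decompE big_map /=.
apply: eq_big_seq => p p_n; have p_pr : prime p by move: p_n; rewrite mem_primes => /andP [].
have : (0 < logn p n)%N by rewrite logn_gt0.
have : (logn p n < 2)%N by rewrite ltnNge -pfactor_dvdn ?n_sqf.
by case: (logn p n) => [|[|]].
Qed.

Lemma prod_primes_sqr_squarefree (R : numDomainType) (D : int) : squarefree D ->
  \prod_(p <- primes `|D|) ((p ^ 2)%:R : R) = D%:~R ^+ 2.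
Proof.
move=> [D_neq0 D_sqf]; rewrite (eq_bigr (fun p => p%:R ^+ 2)) => [|p _]; last exact: natrX.
rewrite prodrXl -natr_prod prod_primes_squarefree ?absz_gt0 //.
by rewrite natr_absz intr_norm real_normK ?realz.
Qed.

Lemma prime_dvd_gt2 (D : int) (p : nat) : (D = 1 %[mod 8])%Z -> prime p ->
  (p %| `|D|)%N -> (2 < p)%N.
Proof.
move=> D1 p_pr pD; case: (ltnP 2 p) => // p_le2.
have p2 : p = 2%N by have := prime_gt1 p_pr; lia.
by move: pD; rewrite p2; lia.
Qed.

Lemma primes_3_size (D : int) : squarefree D -> (D = 1 %[mod 8])%Z ->
  (3%N \in primes `|D| -> 1 < size (primes `|D|))%N.
Proof.
move=> [D_neq0 D_sqf] D1 D3; rewrite ltnNge; apply/negP => size_le1.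
have D_primes : primes `|D| = [:: 3%N].
  by move: D3 size_le1; case: (primes _) => [|a [|b t]] //; rewrite inE => /eqP <-.
have := prod_primes_squarefree (n := `|D|); rewrite D_primes big_seq1 absz_gt0.
by move=> /(_ D_neq0 D_sqf) D_abs; lia.
Qed.

Theorem lemma2p5 (R : realType) (D : int) :
  squarefree D ->
  ~ (exists m : int, D = m ^+ 2) ->
  (D = 1 %[mod 8])%Z ->
  ((4 / (D%:~R) ^+ 2 : R)%:E <= c_loc R D)%E.
Proof.
(* The bound does not need [D] to be a non-square. *)
move=> D_sqf _ D1; set s := primes `|D|.
have w_ge0 p : (0 <= (local_weight R p / (p ^ 2)%:R)%:E)%E.
  by rewrite lee_fin divr_ge0 // /local_weight; case: ifP.
apply: le_trans (lee_pmul _ _ (lexx 4%:E)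
                   (lee_prod_seq (g := local_sum R D) (s := s) w_ge0 _)) => //.
- rewrite prodEFin -EFinM lee_fin big_split /= prodfV prod_primes_sqr_squarefree //.
  rewrite mulrA ler_wpM2r ?invr_ge0 ?sqr_ge0 // ler_peMr //.
  exact: prod_local_weight_ge1 (primes_uniq _) (primes_3_size D_sqf D1).
- exact: prode_ge0.
- move=> p; rewrite mem_primes => /and3P [p_pr _ pD].
  exact: local_sum_ge_weight D_sqf p_pr (prime_dvd_gt2 D1 p_pr pD) pD.
Qed.
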